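(* For every $d\ge 1$, $\mu_t(\mathit{BF}(d))=2^d$.
   Context: Binary strings $c=c_0\cdots c_{d-1}$ have positions $0,\dots,d-1$ from the left; $c(i)$ is $c$ with bit $i$ complemented. $\mathit{BF}(d)$ has vertex set $\{[\ell,c]:\ell\in\{0,\dots,d\},\ c\in\{0,1\}^d\}$; for $\ell\in\{0,\dots,d-1\}$, $[\ell,c]$ is adjacent to $[\ell+1,c']$ iff $c'=c$ or $c'=c(\ell)$, and there are no other edges. For a connected graph $G$ and $X\subseteq V(G)$, two vertices $x,y$ are $X$-visible if some shortest $x,y$-path has no internal vertex in $X$. $X$ is a total mutual-visibility set if every two vertices of $V(G)$ are $X$-visible; $\mu_t(G)$ is the maximum size of a total mutual-visibility set. *)

From mathcomp Require Import all_boot.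
Set Implicit Arguments. Unset Strict Implicit. Unset Printing Implicit Defensive.

Section Visibility.
Variable (V : finType) (adj : rel V).

(* a walk from x to y, given as the list p of vertices after x (x :: p) *)
Definition walk (x y : V) (p : seq V) : Prop := path adj x p /\ last x p = y.

Definition shortest_path (x y : V) (p : seq V) : Prop :=
  walk x y p /\ forall q, walk x y q -> size p <= size q.

(* internal vertices of the path x :: p (all but its two ends) *)
Definition internal (p : seq V) : seq V := take (size p).-1 p.

Definition X_visible (X : {set V}) (x y : V) : Prop :=
  exists p, shortest_path x y p /\ forall z, z \in internal p -> z \notin X.

Definition total_mutual_visibility_set (X : {set V}) : Prop :=
  forall x y : V, X_visible X x y.

Definition is_mu_t (n : nat) : Prop :=
  (exists X : {set V}, total_mutual_visibility_set X /\ #|X| = n) /\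
  (forall X : {set V}, total_mutual_visibility_set X -> #|X| <= n).
End Visibility.

Definition BFV (d : nat) : finType := ('I_d.+1 * {ffun 'I_d -> bool})%type.

Definition flipbit (d : nat) (c : {ffun 'I_d -> bool}) (l : nat) : {ffun 'I_d -> bool} :=
  [ffun j : 'I_d => if val j == l then ~~ c j else c j].

Definition bf_fwd (d : nat) (u v : BFV d) : bool :=
  (val v.1 == (val u.1).+1) && ((v.2 == u.2) || (v.2 == flipbit u.2 (val u.1))).

Definition bf_adj (d : nat) : rel (BFV d) := fun u v => bf_fwd u v || bf_fwd v u.

From mathcomp Require Import all_boot zify.

Set Implicit Arguments. Unset Strict Implicit. Unset Printing Implicit Defensive.

(* The boundary vertices of BF(d) (levels 0 and d) come in pairs of twins
   [l, c], [l, c(k)], where k is the bit flipped by every edge at level l;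
   twins have the same neighbours.  Choosing one vertex from each pair gives
   2^d vertices, and every shortest path can be rerouted through the unchosen
   twins, so the choice is a total mutual-visibility set.  Conversely, an
   interior vertex [l, c] is the only common neighbour of [l-1, c] and
   [l+1, c], and a pair of twins is the set of common neighbours of their two
   neighbours on the adjacent level; hence a total mutual-visibility set avoids
   the interior and meets each twin pair at most once. *)

Lemma card_setU_imset_involution (T : finType) (s : T -> T) (A : {set T}) :
  involutive s -> {in A, forall x, s x \notin A} -> #|A :|: s @: A| = 2 * #|A|.
Proof.
move=> sK sA; rewrite cardsU card_imset; last exact: inv_inj.
suff -> : A :&: s @: A = set0 by rewrite cards0 subn0 mul2n addnn.
apply/setP => x; rewrite !inE; apply/negP => /andP[xA /imsetP[y yA xE]].
by move: (sA y yA); rewrite -xE xA.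
Qed.

Section Visibility.
Variables (V : finType) (adj : rel V).

(* Walks of length n are n-tuples, so minimising the length is decidable. *)
Lemma shortest_path_exists x y : connect adj x y -> exists p, shortest_path adj x y p.
Proof.
move/connectP => [p0 p0_path p0_last].
pose has_walk n := [exists t : n.-tuple V, path adj x t && (last x t == y)].
have walk_size p : walk adj x y p -> has_walk (size p).
  by move=> [p_path p_last]; apply/existsP; exists (in_tuple p); rewrite p_path p_last eqxx.
have [n /existsP[t /andP[t_path /eqP t_last]] n_min] :=
  ex_minnP (ex_intro has_walk _ (walk_size p0 (conj p0_path (esym p0_last)))).
exists t; split => [//|q /walk_size]; rewrite size_tuple; exact: n_min.
Qed.

Lemma internal_rcons (q : seq V) y : internal (rcons q y) = q.
Proof. by rewrite /internal size_rcons -cats1 take_size_cat. Qed.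

Lemma distance2_common_neighbour (X : {set V}) x m y :
  total_mutual_visibility_set adj X ->
  adj x m -> adj m y -> ~~ adj x y -> x != y ->
  exists2 a, a \notin X & adj x a && adj a y.
Proof.
move=> visX xm my /negbTE xy /negbTE x_neq_y.
have [p [[[p_path p_last] p_min] p_int]] := visX x y.
have := p_min [:: m; y]; rewrite /walk /= xm my => /(_ (conj erefl erefl)).
case: p p_path p_last p_int {p_min} => [|a [|b [|]]] //=.
- by move=> _ y_x; rewrite y_x eqxx in x_neq_y.
- by rewrite andbT => x_a a_y; rewrite -a_y x_a in xy.
- rewrite andbT => /andP[xa ab] b_y a_int; exists a; last by rewrite xa -b_y.
  by apply: a_int; rewrite /internal /= inE.
Qed.

Section NeighbourMap.
Hypothesis adj_sym : symmetric adj.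
Variable f : V -> V.
Hypothesis f_adj : forall a b, adj a b -> adj (f a) b.

Lemma adj_map a b : adj a b -> adj a (f b).
Proof. by rewrite adj_sym [adj a _]adj_sym; exact: f_adj. Qed.

Lemma path_map_internal x x' y q : (forall w, adj x w -> adj x' w) ->
  path adj x (rcons q y) -> path adj x' (rcons (map f q) y).
Proof.
elim: q x x' => [|a q IHq] x x' xx' /=; first by rewrite !andbT; exact: xx'.
by move=> /andP[xa a_path]; rewrite adj_map ?xx' //=; apply: IHq a_path; exact: f_adj.
Qed.

Lemma total_mutual_visibility_of_neighbour_map (X : {set V}) :
  (forall x y, connect adj x y) -> (forall v, f v \notin X) ->
  total_mutual_visibility_set adj X.
Proof.
move=> conn fX x y; have [p [[p_path p_last] p_min]] := shortest_path_exists (conn x y).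
case/lastP: p p_path p_last p_min => [|q z] p_path p_last p_min.
  by exists [::]; split.
rewrite last_rcons in p_last; subst z.
exists (rcons (map f q) y); split.
- split; first by split; [exact: path_map_internal p_path | rewrite last_rcons].
  by move=> r /p_min; rewrite !size_rcons size_map.
- by move=> z; rewrite internal_rcons => /mapP[w _ ->].
Qed.

End NeighbourMap.
End Visibility.

Section Words.
Variable d : nat.
Implicit Types c e : {ffun 'I_d -> bool}.

Lemma flipbitK c l : flipbit (flipbit c l) l = c.
Proof. by apply/ffunP => j; rewrite !ffunE; case: (val j == l); rewrite /= ?negbK. Qed.

Lemma flipbit_eq c e l : (e == flipbit c l) = (flipbit e l == c).
Proof. by apply/eqP/eqP => [->|<-]; rewrite flipbitK. Qed.

Lemma flipbit_eqC c e l : (e == flipbit c l) = (c == flipbit e l).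
Proof. by rewrite flipbit_eq eq_sym. Qed.

Lemma eq_flipbit_word c e l : (flipbit c l == flipbit e l) = (c == e).
Proof. by rewrite flipbit_eq flipbitK. Qed.

Lemma eq_flipbit_index c k m : k < d -> (flipbit c k == flipbit c m) = (k == m).
Proof.
move=> k_lt; case: (eqVneq k m) => [-> | k_m]; first by rewrite eqxx.
apply/eqP => /ffunP /(_ (Ordinal k_lt)); rewrite !ffunE /= eqxx (negbTE k_m).
by case: (c _).
Qed.

Lemma flipbit_neq c k : k < d -> (flipbit c k == c) = false.
Proof.
move=> k_lt; apply/eqP => /ffunP /(_ (Ordinal k_lt)); rewrite !ffunE /= eqxx.
by case: (c _).
Qed.

Lemma common_flip_index c e k m : k < d ->
  (e == c) || (e == flipbit c m) ->
  (e == flipbit c k) || (e == flipbit (flipbit c k) m) -> m = k.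
Proof.
move=> k_lt /orP[] /eqP -> /orP[].
- by rewrite eq_sym flipbit_neq.
- by rewrite flipbit_eq eq_sym eq_flipbit_index // => /eqP ->.
- by rewrite eq_sym eq_flipbit_index // => /eqP.
- by rewrite eq_flipbit_word eq_sym flipbit_neq.
Qed.

End Words.

Section Butterfly.
Variable n : nat.
Local Notation d := n.+1.
Local Notation V := (BFV d).
Local Notation adj := (@bf_adj d).
Implicit Types (c e : {ffun 'I_d -> bool}) (u v w : V).

Lemma bf_adj_sym : symmetric adj.
Proof. by move=> u w; rewrite /bf_adj orbC. Qed.

(* An edge between levels [l] and [l+1] may flip bit [l], the smaller level. *)
Lemma bf_adjE u w : adj u w =
  [&& (u.1 == w.1.+1 :> nat) || (w.1 == u.1.+1 :> nat)
    & (w.2 == u.2) || (w.2 == flipbit u.2 (minn u.1 w.1))].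
Proof.
rewrite /bf_adj /bf_fwd.
have [wu | wu] := eqVneq (w.1 : nat) u.1.+1.
  have -> : (u.1 == w.1.+1 :> nat) = false by lia.
  have -> : minn u.1 w.1 = u.1 by lia.
  by rewrite /= orbF.
have [uw | uw] := eqVneq (u.1 : nat) w.1.+1; rewrite /= ?andbF //.
have -> : minn u.1 w.1 = w.1 by lia.
by rewrite eq_sym (flipbit_eqC u.2).
Qed.

Lemma bf_adj_up l c e : l < d -> (e == c) || (e == flipbit c l) ->
  adj (inord l, c) (inord l.+1, e).
Proof. by move=> l_lt ce; rewrite /bf_adj /bf_fwd /= !inordK ?eqxx ?ce //; lia. Qed.

Lemma connect_up l k c : l + k <= d -> connect adj (inord l, c) (inord (l + k), c).
Proof.
elim: k => [|k IHk] lk; first by rewrite addn0.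
apply: connect_trans (IHk (ltnW _)) (connect1 _); first by lia.
by rewrite addnS bf_adj_up ?eqxx //; lia.
Qed.

Lemma connect_down l c e : l <= d -> (forall j : 'I_d, l <= j -> c j = e j) ->
  connect adj (inord l, c) (ord0, e).
Proof.
elim: l c => [|l IHl] c l_le ce.
  have -> : c = e by apply/ffunP => j; exact: ce.
  by have -> : inord 0 = ord0 :> 'I_d.+1 by apply: val_inj; rewrite /= inordK.
pose c' := if c (inord l) == e (inord l) then c else flipbit c l.
have c'e (j : 'I_d) : l <= j -> c' j = e j.
  rewrite leq_eqVlt => /orP[/eqP lj | lj].
    have -> : j = inord l by apply: val_inj; rewrite /= inordK; lia.
    rewrite /c'; case: eqP => // /eqP; rewrite ffunE /= inordK ?eqxx; last by lia.
    by case: (c _); case: (e _).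
  rewrite /c'; case: ifP => _; rewrite ?ffunE ?(gtn_eqF lj); exact: ce.
apply: connect_trans (connect1 _) (IHl c' (ltnW l_le) c'e).
rewrite bf_adj_sym bf_adj_up //; rewrite /c'; case: ifP => _; rewrite ?eqxx //.
by rewrite eq_sym flipbit_eq eqxx orbT.
Qed.

Lemma bf_connected u w : connect adj u w.
Proof.
have to_root v : connect adj v (ord0, [ffun=> false]).
  case: v => l c; have l_le : l <= d by rewrite -ltnS.
  apply: (connect_trans (y := (inord d, c))).
    by have := @connect_up l (d - l) c; rewrite subnKC // inord_val => /(_ (leqnn d)).
  by apply: connect_down => // j; rewrite leqNgt ltn_ord.
apply: connect_trans (to_root u) _.
by rewrite (sym_connect_sym bf_adj_sym); exact: to_root.
Qed.

(* The bit flipped by the edges at a boundary vertex: bit 0 at level 0 (where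
   [0.-1 = 0]) and bit [d - 1] at level [d]. *)
Definition twin_bit v : 'I_d := inord v.1.-1.
Definition bf_twin v : V := (v.1, flipbit v.2 (twin_bit v)).
Definition boundary : {set V} := setX [set ord0; ord_max] setT.

Lemma twin_bitE v : twin_bit v = v.1.-1 :> nat.
Proof. by rewrite inordK //; have := ltn_ord v.1; lia. Qed.

Lemma bf_twinK : involutive bf_twin.
Proof. by case=> l c; rewrite /bf_twin flipbitK. Qed.

Lemma bf_twin_bit v : (bf_twin v).2 (twin_bit (bf_twin v)) = ~~ v.2 (twin_bit v).
Proof. by rewrite ffunE eqxx. Qed.

Lemma boundary_level v : v \in boundary -> v.1 = 0 :> nat \/ v.1 = d :> nat.
Proof.
by case: v => l c; rewrite in_setX in_set2 inE andbT => /orP[] /eqP ->; [left | right].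
Qed.

Lemma bf_twin_boundary v : (bf_twin v \in boundary) = (v \in boundary).
Proof. by case: v => l c; rewrite /bf_twin !in_setX !inE. Qed.

Lemma bf_adj_twin v w : v \in boundary -> adj (bf_twin v) w = adj v w.
Proof.
case: v w => [l c] [k e] /boundary_level /= l_bd; rewrite !bf_adjE /=.
case: (boolP ((l == k.+1 :> nat) || (k == l.+1 :> nat))) => //= levels.
have -> : minn l k = l.-1 by have := ltn_ord k; lia.
by rewrite twin_bitE flipbitK orbC.
Qed.

Lemma interior_common_neighbour l c a : 0 < l < d ->
  adj (inord l.-1, c) a -> adj a (inord l.+1, c) -> a = (inord l, c).
Proof.
case: a => k e l_bd; rewrite !bf_adjE /= !inordK; try lia.
move=> /andP[levels1 e_c] /andP[levels2 c_e].
have k_l : k = l :> nat by lia.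
rewrite k_l in e_c c_e; rewrite (minn_idPl (leq_pred l)) in e_c.
rewrite (minn_idPl (leqnSn l)) flipbit_eqC in c_e.
have -> : k = inord l by apply: val_inj; rewrite /= inordK; lia.
move: c_e; case/orP: e_c => /eqP -> //.
by rewrite eq_sym flipbit_neq ?eq_flipbit_index //=; lia.
Qed.

(* The level next to a boundary vertex: 1 above level 0, [n = d - 1] below level [d]. *)
Definition inward v : 'I_d.+1 := inord (if v.1 == 0 :> nat then 1 else n).

Lemma inwardE v : inward v = (if v.1 == 0 :> nat then 1 else n) :> nat.
Proof. by rewrite inordK //; case: ifP. Qed.

Lemma bf_adj_inward v : v \in boundary -> adj (inward v, v.2) v.
Proof.
case: v => l c /boundary_level /= l_bd; rewrite bf_adjE /= inwardE.
by case: l_bd => -> /=; rewrite !eqxx ?orbT.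
Qed.

Lemma boundary_common_neighbour v a : v \in boundary ->
  adj (inward v, v.2) a -> adj a (inward v, (bf_twin v).2) -> a = v \/ a = bf_twin v.
Proof.
case: v a => [l c] [k e] /boundary_level /= l_bd; rewrite !bf_adjE /= !inwardE.
move=> /andP[levels1 e_c] /andP[levels2 twin_e].
rewrite flipbit_eqC eq_sym minnC in twin_e.
have := common_flip_index (ltn_ord _) e_c twin_e; rewrite twin_bitE /= => edge_bit.
rewrite edge_bit in e_c.
have -> : k = l.
  apply: val_inj => /=; have := ltn_ord k.
  by case: l_bd levels1 edge_bit => -> /=; lia.
by case/orP: e_c => /eqP ->; [left | right; rewrite /bf_twin /= twin_bitE].
Qed.

Lemma interior_notin X v : total_mutual_visibility_set adj X ->
  v \notin boundary -> v \notin X.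
Proof.
case: v => l c visX l_int.
have l_bd : 0 < l < d.
  move: l_int; rewrite in_setX in_set2 inE andbT negb_or -!val_eqE /=.
  by have := ltn_ord l; lia.
rewrite -[l]inord_val.
have x_v : adj (inord l.-1, c) (inord l, c).
  by have := @bf_adj_up l.-1 c c; rewrite prednK ?eqxx //; [apply|]; lia.
have v_y : adj (inord l, c) (inord l.+1, c) by apply: bf_adj_up; rewrite ?eqxx //; lia.
have x_y : ~~ adj (inord l.-1, c) (inord l.+1, c).
  by rewrite bf_adjE; apply/negP => /andP[]; rewrite /= !inordK; lia.
have x_neq_y : (inord l.-1, c) != (inord l.+1, c) :> V.
  by apply/eqP => -[] /(congr1 val) /=; rewrite !inordK; lia.
have [a aX /andP[xa ay]] := distance2_common_neighbour visX x_v v_y x_y x_neq_y.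
by rewrite -(interior_common_neighbour l_bd xa ay).
Qed.

Lemma twin_notin X v : total_mutual_visibility_set adj X ->
  v \in boundary -> v \in X -> bf_twin v \notin X.
Proof.
move=> visX v_bd vX.
have x_v := bf_adj_inward v_bd.
have v_y : adj v (inward v, (bf_twin v).2).
  by rewrite -bf_adj_twin // bf_adj_sym; apply: bf_adj_inward; rewrite bf_twin_boundary.
have x_y : ~~ adj (inward v, v.2) (inward v, (bf_twin v).2).
  by rewrite bf_adjE /= !(ltn_eqF (ltnSn _)).
have x_neq_y : (inward v, v.2) != (inward v, (bf_twin v).2).
  by rewrite xpair_eqE eqxx /= eq_sym flipbit_neq.
have [a aX /andP[xa ay]] := distance2_common_neighbour visX x_v v_y x_y x_neq_y.
by case: (boundary_common_neighbour v_bd xa ay) aX => -> //; rewrite vX.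
Qed.

Lemma card_boundary : #|boundary| = 2 * 2 ^ d.
Proof. by rewrite cardsX cards2 cardsT card_ffun card_bool card_ord. Qed.

Lemma total_mutual_visibility_card X : total_mutual_visibility_set adj X -> #|X| <= 2 ^ d.
Proof.
move=> visX.
have X_bd : X \subset boundary.
  by apply/subsetP => v vX; apply: contraLR vX; exact: interior_notin.
have twins_bd : X :|: bf_twin @: X \subset boundary.
  rewrite subUset X_bd /=; apply/subsetP => _ /imsetP[v vX ->].
  by rewrite bf_twin_boundary (subsetP X_bd).
have := subset_leq_card twins_bd.
rewrite card_setU_imset_involution ?card_boundary ?leq_pmul2l //; first exact: bf_twinK.
by move=> v vX; exact: twin_notin (subsetP X_bd v vX) vX.
Qed.

(* One vertex from each pair of twins. *)
Definition twin_rep : {set V} := [set v in boundary | v.2 (twin_bit v)].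

Lemma twin_rep_twin : {in twin_rep, forall v, bf_twin v \notin twin_rep}.
Proof. by move=> v /setIdP[_ v_bit]; apply/negP => /setIdP[_]; rewrite bf_twin_bit v_bit. Qed.

Lemma card_twin_rep : #|twin_rep| = 2 ^ d.
Proof.
have rep_cover : twin_rep :|: bf_twin @: twin_rep = boundary.
  apply/setP => v; rewrite inE; apply/orP/idP => [[|/imsetP[w]] | v_bd].
  - by rewrite inE => /andP[].
  - by rewrite inE => /andP[w_bd _] ->; rewrite bf_twin_boundary.
  - case b: (v.2 (twin_bit v)); [left | right]; first by rewrite inE v_bd b.
    apply/imsetP; exists (bf_twin v); last by rewrite bf_twinK.
    by rewrite inE bf_twin_boundary v_bd bf_twin_bit b.
have := card_setU_imset_involution bf_twinK twin_rep_twin.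
by rewrite rep_cover card_boundary => /eqP; rewrite eqn_pmul2l // => /eqP.
Qed.

Lemma twin_rep_total_mutual_visibility : total_mutual_visibility_set adj twin_rep.
Proof.
pose f v := if v \in twin_rep then bf_twin v else v.
apply: (@total_mutual_visibility_of_neighbour_map _ _ bf_adj_sym f) => [a b | | v].
- by rewrite /f; case: ifP => // /setIdP[a_bd _]; rewrite bf_adj_twin.
- exact: bf_connected.
- by rewrite /f; case: ifPn => //; exact: twin_rep_twin.
Qed.

End Butterfly.

Theorem theorem5p6 (d : nat) (hd : 1 <= d) :
  is_mu_t (@bf_adj d) (2 ^ d).
Proof.
case: d hd => [|n] // _; split.
- by exists (twin_rep n); split; [exact: twin_rep_total_mutual_visibility | exact: card_twin_rep].
- exact: total_mutual_visibility_card.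
Qed.
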